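(* Let $\mathcal{C}\subset\mathbb{R}^n$ be a nonempty compact convex set with Euclidean diameter $D$, let $f$ be continuously differentiable with $\nabla f$ $L$-Lipschitz on $\mathcal{C}$, and assume $f$ is $\rho$-quasar-convex on $\mathcal{C}$ with $\rho\in(0,1]$ (there is $x^\star\in\arg\min_{\mathcal{C}}f$ with $f^\star-f(y)\ge\frac1\rho\langle\nabla f(y),x^\star-y\rangle$ for all $y\in\mathcal{C}$, $f^\star=\min_{\mathcal{C}}f$). Let $\{x^t\}_{t=0}^T$ be generated by the Boosted Stochastic Frank–Wolfe algorithm described in the context. Then for every $t$, $$F_{t+1}\le(1-\rho\eta_t)F_t+2\eta_t\|\Delta^t\|D+\frac L2\eta_t^2D^2,$$ where $F_t=f(x^t)-f^\star$ and $\Delta^t=m^t-\nabla f(x^t)$.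
   Context: Euclidean norms; $D=\max_{x,y\in\mathcal{C}}\|x-y\|$. $\mathrm{lmo}(v)$ denotes a (fixed selection of a) point of $\arg\min_{s\in\mathcal{C}}\langle s,v\rangle$. $\mathrm{align}(d,\hat d)=\frac{\langle d,\hat d\rangle}{\|d\|\|\hat d\|}$ if $\hat d\ne0$, $-1$ if $\hat d=0$. Algorithm: inputs $K\ge1$, $\delta\in(0,1]$, step decays $\eta_t>0$, a vector $m^{\rm init}$; $x^0=\mathrm{lmo}(m^{\rm init})$. At iteration $t$, a (random) estimator $m^t$ of $\nabla f(x^t)$ is formed. Boosting: $\psi^0=0$, $\Lambda_t=0$, $k=0$; while $k\le K-1$: $r^k=-m^t-\psi^k$, $v^k=\mathrm{lmo}(-r^k)$; if $k=0$, $s^t=v^0$; if $\psi^k\ne0$, $u^k$ is whichever of $v^k-x^t$, $-\psi^k/\|\psi^k\|$ has the larger inner product with $r^k$, else $u^k=v^k-x^t$; if $u^k=0$ stop; $\lambda_k=\langle r^k,u^k\rangle/\|u^k\|^2$, $\phi^k=\psi^k+\lambda_ku^k$; if $\mathrm{align}(-m^t,\phi^k)-\mathrm{align}(-m^t,\psi^k)\ge\delta$ then $\psi^{k+1}=\phi^k$, $\Lambda_t\leftarrow\Lambda_t+\lambda_k$ if $u^k=v^k-x^t$ and $\Lambda_t\leftarrow\Lambda_t(1-\lambda_k/\|\psi^k\|)$ otherwise, $k\leftarrow k+1$; else stop. With $\psi$ the last accepted candidate, $\tilde d^t=\psi/\Lambda_t$ if $\Lambda_t\ne0$, else $0$. $\gamma_t=\min\{\eta_t\|s^t-x^t\|/\|\tilde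 d^t\|,1\}$ if $\tilde d^t\ne0$, else $1$. If $\gamma_t<1$: $x^{t+1}=x^t+\gamma_t\tilde d^t$; otherwise $x^{t+1}=x^t+\eta_t(s^t-x^t)$. *)

From HB Require Import structures.
From mathcomp Require Import all_boot all_order all_algebra.
From mathcomp Require Import all_classical all_reals all_analysis.
Set Implicit Arguments. Unset Strict Implicit. Unset Printing Implicit Defensive.
Import Order.TTheory GRing.Theory Num.Theory.
Import numFieldNormedType.Exports.
Local Open Scope classical_set_scope.
Local Open Scope ring_scope.

Section BFW.
Variables (R : realType) (n : nat).
Notation V := 'rV[R]_n.

Definition inner (u v : V) : R := \sum_(i < n) u 0 i * v 0 i.
Definition enorm (u : V) : R := Num.sqrt (inner u u).

Definition align (d dh : V) : R :=
  if dh != 0 then inner d dh / (enorm d * enorm dh) else -1.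

Definition is_lmo (C : set V) (lmo : V -> V) : Prop :=
  forall v, C (lmo v) /\ forall s, C s -> inner (lmo v) v <= inner s v.

Definition is_diameter (C : set V) (D : R) : Prop :=
  (forall x y, C x -> C y -> enorm (x - y) <= D) /\
  (exists x y, C x /\ C y /\ enorm (x - y) = D).

(* Boosting loop: [k] = number of remaining allowed iterations
   (the loop runs for k = 0, ..., K-1), state (psi, Lambda). *)
Fixpoint boost_loop (lmo : V -> V) (delta : R) (x m : V) (k : nat)
    (psi : V) (Lam : R) : V * R :=
  match k with
  | 0%N => (psi, Lam)
  | k'.+1 =>
    let r := - m - psi in
    let v := lmo (- r) in
    (* chooseV = true iff u^k = v^k - x^t (ties broken towards v^k - x^t) *)
    let chooseV :=
      if psi != 0 then inner r (v - x) >= inner r (- ((enorm psi)^-1 *: psi))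
      else true in
    let u := if chooseV then v - x else - ((enorm psi)^-1 *: psi) in
    if u == 0 then (psi, Lam) else
    let lam := inner r u / (enorm u ^+ 2) in
    let phi := psi + lam *: u in
    if align (- m) phi - align (- m) psi >= delta then
      boost_loop lmo delta x m k' phi
        (if chooseV then Lam + lam else Lam * (1 - lam / enorm psi))
    else (psi, Lam)
  end.

Definition bsfw_step (lmo : V -> V) (K : nat) (delta : R) (eta : R)
    (x m : V) : V :=
  let s := lmo m in (* s^t = v^0 = lmo(-r^0) = lmo(m) *)
  let pL := boost_loop lmo delta x m K 0 0 in
  let psi := pL.1 in
  let Lam := pL.2 in
  let dt := if Lam != 0 then Lam^-1 *: psi else 0 in
  let gamma := if dt != 0 then Num.min (eta * enorm (s - x) / enorm dt) 1
               else 1 in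
  if gamma < 1 then x + gamma *: dt else x + eta *: (s - x).

End BFW.

(* Smoothness gives f y <= f x + <grad f x, y - x> + L/2 |y - x|^2.  The step
   y = x^{t+1} stays in C, is no longer than eta_t (s^t - x^t), and decreases
   <m^t, .> at least as much as it.  For the boosted step, every accepted boosting iterate keeps
   x^t + psi / Lambda_t in C and only increases the alignment of psi with -m^t,
   which starts at that of s^t - x^t; gamma_t then rescales to exactly the
   Frank-Wolfe length.  Replacing m^t by grad f(x^t) costs eta_t |Delta^t| D
   twice (at the step and at x^*, through the optimality of s^t), and
   quasar-convexity bounds <grad f(x^t), x^* - x^t> by -rho F_t. *)

From HB Require Import structures.
From mathcomp Require Import all_boot all_order all_algebra.
From mathcomp Require Import all_classical all_reals all_analysis.
From mathcomp Require Import ring lra.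
Import Order.TTheory GRing.Theory Num.Theory.
Import numFieldNormedType.Exports.
Local Open Scope classical_set_scope.
Local Open Scope ring_scope.
Set Implicit Arguments. Unset Strict Implicit. Unset Printing Implicit Defensive.

Section InnerProduct.
Variables (R : realType) (n : nat).
Implicit Types (u v w : 'rV[R]_n).

Lemma innerC u v : inner u v = inner v u.
Proof. by apply: eq_bigr => i _; rewrite mulrC. Qed.

Lemma innerDl u w v : inner (u + w) v = inner u v + inner w v.
Proof. by rewrite /inner -big_split; apply: eq_bigr => i _; rewrite mxE mulrDl. Qed.

Lemma innerZl c u v : inner (c *: u) v = c * inner u v.
Proof. by rewrite /inner mulr_sumr; apply: eq_bigr => i _; rewrite mxE mulrA. Qed.

Lemma innerNl u v : inner (- u) v = - inner u v.
Proof. by rewrite -scaleN1r innerZl mulN1r. Qed.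

Lemma innerBl u w v : inner (u - w) v = inner u v - inner w v.
Proof. by rewrite innerDl innerNl. Qed.

Lemma innerZr c u v : inner v (c *: u) = c * inner v u.
Proof. by rewrite innerC innerZl innerC. Qed.

Lemma innerNr u v : inner v (- u) = - inner v u.
Proof. by rewrite innerC innerNl innerC. Qed.

Lemma innerBr u w v : inner v (u - w) = inner v u - inner v w.
Proof. by rewrite innerC innerBl !(innerC v). Qed.

Lemma inner0r v : inner v 0 = 0.
Proof. by rewrite -(scale0r 0) innerZr mul0r. Qed.

Lemma inner0l v : inner 0 v = 0.
Proof. by rewrite innerC inner0r. Qed.

Lemma inner_ge0 u : 0 <= inner u u.
Proof. by apply: sumr_ge0 => i _; rewrite -expr2 sqr_ge0. Qed.

Lemma inner_eq0 u : (inner u u == 0) = (u == 0).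
Proof.
apply/idP/eqP => [|->]; last by rewrite inner0l.
rewrite psumr_eq0 => [/allP u0|i _]; last by rewrite -expr2 sqr_ge0.
apply/rowP => j; rewrite mxE.
by have := u0 j (mem_index_enum _); rewrite /= mulf_eq0 orbb => /eqP.
Qed.

Lemma enorm_ge0 u : 0 <= enorm u.
Proof. exact: sqrtr_ge0. Qed.

Lemma enorm_sqr u : enorm u ^+ 2 = inner u u.
Proof. by rewrite sqr_sqrtr // inner_ge0. Qed.

Lemma enorm_eq0 u : (enorm u == 0) = (u == 0).
Proof. by rewrite /enorm sqrtr_eq0 le_eqVlt ltNge inner_ge0 orbF inner_eq0. Qed.

Lemma enorm_gt0 u : (0 < enorm u) = (u != 0).
Proof. by rewrite lt_def enorm_eq0 enorm_ge0 andbT. Qed.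

Lemma enorm0 : enorm (0 : 'rV[R]_n) = 0.
Proof. by apply/eqP; rewrite enorm_eq0. Qed.

Lemma enormZ c u : enorm (c *: u) = `|c| * enorm u.
Proof. by rewrite /enorm innerZl innerZr mulrA -expr2 sqrtrM ?sqr_ge0 // sqrtr_sqr. Qed.

Lemma enormN u : enorm (- u) = enorm u.
Proof. by rewrite -scaleN1r enormZ normrN normr1 mul1r. Qed.

Lemma cauchy_schwarz u v : inner u v <= enorm u * enorm v.
Proof.
have [->|u0] := eqVneq u 0; first by rewrite inner0l enorm0 mul0r.
have [->|v0] := eqVneq v 0; first by rewrite inner0r enorm0 mulr0.
have a0 : 0 < enorm u by rewrite enorm_gt0.
have b0 : 0 < enorm v by rewrite enorm_gt0.
set a := enorm u in a0 *; set b := enorm v in b0 *.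
have := inner_ge0 (b *: u - a *: v).
rewrite !(innerBl, innerBr, innerZl, innerZr) -!enorm_sqr -/a -/b (innerC v u) => sq_ge0.
have : 0 <= (a * b) * (a * b - inner u v) by nra.
by rewrite pmulr_rge0 ?mulr_gt0 // subr_ge0.
Qed.

Lemma cauchy_schwarzN u v : - inner u v <= enorm u * enorm v.
Proof. by rewrite -innerNl -(enormN u) cauchy_schwarz. Qed.

End InnerProduct.

Lemma convex_setP (R : numDomainType) (M : lmodType R) (A : set M) a b l :
  convex_set A -> A a -> A b -> 0 <= l <= 1 -> A (l *: a + (1 - l) *: b).
Proof.
move=> convA Aa Ab /andP[l0 l1].
by have := convA a b (Itv01 l0 l1) (mem_set Aa) (mem_set Ab); rewrite inE.
Qed.

Lemma lmo_inner_le (R : realType) (n : nat) (C : set 'rV[R]_n) lmo v y :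
  is_lmo C lmo -> C y -> inner v (lmo v - y) <= 0.
Proof.
move=> hlmo Cy; have [_ lmo_min] := hlmo v.
by rewrite innerBr !(innerC v) subr_le0 lmo_min.
Qed.

Section Alignment.
Variables (R : realType) (n : nat).
Implicit Types (d u v : 'rV[R]_n).

Lemma align0 d : align d 0 = -1.
Proof. by rewrite /align eqxx. Qed.

Lemma align_neq0 d v : -1 < align d v -> v != 0.
Proof. by apply: contraTneq => ->; rewrite align0 ltxx. Qed.

Lemma alignZ c d v : 0 < c -> align d (c *: v) = align d v.
Proof.
move=> c0; rewrite /align scaler_eq0 gt_eqF //=; case: ifP => // _.
rewrite innerZr enormZ gtr0_norm // mulrCA invfM mulrACA mulfV ?mul1r //.
by rewrite gt_eqF.
Qed.

Lemma alignN d v : v != 0 -> align d (- v) = - align d v.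
Proof. by move=> v0; rewrite /align oppr_eq0 v0 innerNr enormN mulNr. Qed.

Lemma inner_align d v : v != 0 -> inner d v = align d v * (enorm d * enorm v).
Proof.
move=> v0; rewrite /align v0.
have [->|d0] := eqVneq d 0; first by rewrite inner0l enorm0 !mul0r.
by rewrite divfK // mulf_neq0 // gt_eqF // enorm_gt0.
Qed.

Lemma align_ge0 d v : v != 0 -> 0 <= inner d v -> 0 <= align d v.
Proof. by move=> v0 dv0; rewrite /align v0 divr_ge0 // mulr_ge0 // enorm_ge0. Qed.

Lemma align_ltZ_gt0 c d v :
  0 <= align d v -> align d v < align d (c *: v) -> 0 < c.
Proof.
move=> a0 lt_a; rewrite ltNge; apply/negP => c_le0.
have v0 : v != 0 by apply: align_neq0; apply: lt_le_trans a0; rewrite ltrN10.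
move: lt_a; have [->|c_neq0] := eqVneq c 0.
  by rewrite scale0r align0 ltNge (le_trans _ a0) // lerN10.
have {c_le0 c_neq0}c_lt0 : c < 0 by rewrite lt_neqAle c_neq0.
rewrite -[c]opprK scaleNr alignN ?scaler_eq0 ?oppr_eq0 ?negb_or ?lt_eqF //.
by rewrite alignZ ?oppr_gt0 // ltNge (le_trans _ a0) // oppr_le0.
Qed.

Lemma align_le_cross d u v : u != 0 -> v != 0 -> align d u <= align d v ->
  inner d u * enorm v <= inner d v * enorm u.
Proof.
move=> u0 v0 le_uv; rewrite !inner_align //.
have k0 : 0 <= enorm d * enorm u * enorm v by rewrite !mulr_ge0 // enorm_ge0.
by have := ler_wpM2r k0 le_uv; lra.
Qed.

End Alignment.

Lemma is_derive_line (R : numFieldType) (V W : normedModType R) (f : V -> W)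
    (x h : V) (s : R) (df : W) :
  is_derive (x + s *: h) h f df -> is_derive s 1 (fun t => f (x + t *: h)) df.
Proof.
case=> dfh <-.
have quotE : (fun e : R => e^-1 *: (((fun t => f (x + t *: h)) \o shift s) (e *: 1)
                 - f (x + s *: h))) =
             (fun e : R => e^-1 *: ((f \o shift (x + s *: h)) (e *: h) - f (x + s *: h))).
  apply/funext => e /=; congr (_ *: (_ - _)); congr f.
  by rewrite /shift /= -[e%:A]/(e * 1) mulr1 scalerDl addrCA.
by apply: DeriveDef; rewrite /derivable /derive quotE.
Qed.

Lemma is_derive_quad (R : numFieldType) (a b s : R) :
  is_derive s 1 (fun t : R => a * t + b * t ^+ 2) (a + b * (2 * s)).
Proof.
have -> : (fun t : R => a * t + b * t ^+ 2) = a \*: id + b \*: id ^+ 2.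
  by apply/funext => t.
have -> : a + b * (2 * s) = a *: 1 + b *: ((2%:R * s ^+ 1) *: 1).
  by rewrite expr1 -[RHS]/(a * 1 + b * ((2 * s) * 1)) !mulr1.
exact: is_deriveD.
Qed.

Section Smoothness.
Variables (R : realType) (n : nat) (C : set 'rV[R]_n) (f : 'rV[R]_n -> R)
  (gradf : 'rV[R]_n -> 'rV[R]_n) (L : R).
Hypothesis convC : convex_set C.
Hypothesis gradfP : forall y, C y -> differentiable f y /\
  forall h, 'd f y h = inner (gradf y) h.
Hypothesis gradf_lipschitz : forall y z, C y -> C z ->
  enorm (gradf y - gradf z) <= L * enorm (y - z).

Lemma lipschitz_subsingleton y z : L < 0 -> C y -> C z -> y = z.
Proof.
move=> L_lt0 Cy Cz; apply/eqP; apply: contraTT L_lt0 => yz.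
have := le_trans (enorm_ge0 _) (gradf_lipschitz Cy Cz).
by rewrite -leNgt pmulr_lge0 // enorm_gt0 subr_eq0.
Qed.

Lemma descent_lemma x y : C x -> C y ->
  f y <= f x + inner (gradf x) (y - x) + L / 2 * enorm (y - x) ^+ 2.
Proof.
move=> Cx Cy; set h := y - x; set a := inner (gradf x) h; set b := L / 2 * enorm h ^+ 2.
have Cseg (s : R) : 0 <= s <= 1 -> C (x + s *: h).
  move=> s01; have -> : x + s *: h = s *: y + (1 - s) *: x.
    by rewrite /h scalerBr scalerBl scale1r addrCA.
  exact: convex_setP convC Cy Cx s01.
(* Subtracting the quadratic model leaves a nonincreasing function on [0, 1]. *)
pose psi := fun s => f (x + s *: h) - (a * s + b * s ^+ 2).
pose dpsi := fun s => inner (gradf (x + s *: h)) h - (a + b * (2 * s)).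
have psi_derive (s : R) : 0 <= s <= 1 -> is_derive s 1 psi (dpsi s).
  move=> s01; have [dfs dfsE] := gradfP (Cseg s s01).
  apply: is_deriveB (is_derive_quad _ _ _); apply: is_derive_line.
  by apply: DeriveDef; [exact: diff_derivable | rewrite deriveE // dfsE].
have dpsi_le0 (s : R) : 0 <= s <= 1 -> dpsi s <= 0.
  move=> /[dup] s01 /andP[s0 _].
  rewrite /dpsi /a subr_le0 -lerBlDl -innerBl.
  apply: le_trans (cauchy_schwarz _ _) _.
  apply: le_trans (ler_wpM2r (enorm_ge0 _) (gradf_lipschitz (Cseg s s01) Cx)) _.
  rewrite addrC addKr enormZ ger0_norm // /b; lra.
have [c /[!in_itv] /= /andP[c0 c1] psiE] : exists2 c, c \in `]0, 1[%R &
    psi 1 - psi 0 = dpsi c * (1 - 0).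
  apply: MVT ltr01 _ _ => [s /[!in_itv] /= /andP[s0 s1]|].
    by apply: psi_derive; rewrite !ltW.
  apply: derivable_within_continuous => s /[!in_itv] /= s01.
  by have [] := psi_derive s s01.
have : psi 1 <= psi 0.
  by rewrite -subr_le0 psiE subr0 mulr1 dpsi_le0 // !ltW.
rewrite /psi scale1r scale0r addr0 [x + h]addrC subrK; lra.
Qed.

End Smoothness.

Section Boosting.
Variables (R : realType) (n : nat) (C : set 'rV[R]_n) (lmo : 'rV[R]_n -> 'rV[R]_n)
  (delta : R) (x m : 'rV[R]_n).
Hypotheses (convC : convex_set C) (lmoP : is_lmo C lmo) (Cx : C x)
  (delta_gt0 : 0 < delta).

(* Lam is the total weight of the accepted steps, so that x + psi / Lam is a
   convex combination of the vertices visited; accepted steps only increase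
   the alignment of psi with -m. *)
Definition aligned_feasible (psi : 'rV[R]_n) (Lam : R) : Prop :=
  [/\ 0 < Lam, C (x + Lam^-1 *: psi), lmo m - x != 0
    & align (- m) (lmo m - x) <= align (- m) psi].

Definition boost_inv (p : 'rV[R]_n * R) : Prop :=
  p = (0, 0) \/ aligned_feasible p.1 p.2.

Lemma inner_lmoN_ge0 r : 0 <= inner r (lmo (- r) - x).
Proof. by rewrite -oppr_le0 -innerNl (lmo_inner_le _ lmoP Cx). Qed.

Lemma accepted_align_lt psi phi :
  delta <= align (- m) phi - align (- m) psi -> align (- m) psi < align (- m) phi.
Proof. by move=> acc; rewrite -subr_gt0 (lt_le_trans delta_gt0 acc). Qed.

Lemma fw_dir_align_ge0 : lmo m - x != 0 -> 0 <= align (- m) (lmo m - x).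
Proof. by move=> sx0; rewrite align_ge0 // -[m in lmo m]opprK inner_lmoN_ge0. Qed.

Lemma aligned_feasible_align_ge0 psi Lam :
  aligned_feasible psi Lam -> 0 <= align (- m) psi.
Proof. by case=> _ _ sx0; apply: le_trans; rewrite fw_dir_align_ge0. Qed.

Lemma aligned_feasible_neq0 psi Lam : aligned_feasible psi Lam -> psi != 0.
Proof.
move=> /aligned_feasible_align_ge0 psi_align_ge0; apply: align_neq0.
by apply: lt_le_trans psi_align_ge0; rewrite ltrN10.
Qed.

Lemma aligned_feasible_fw_dir lam : lmo m - x != 0 -> 0 < lam ->
  aligned_feasible (lam *: (lmo m - x)) lam.
Proof.
move=> sx0 lam_gt0; split => //; last by rewrite alignZ.
by rewrite scalerA mulVf ?gt_eqF // scale1r addrC subrK; case: (lmoP m).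
Qed.

Lemma aligned_feasible_vertex psi Lam v lam :
  aligned_feasible psi Lam -> C v -> 0 <= lam ->
  align (- m) psi <= align (- m) (psi + lam *: (v - x)) ->
  aligned_feasible (psi + lam *: (v - x)) (Lam + lam).
Proof.
move=> [Lam_gt0 Cpsi sx0 le_sx_psi] Cv lam_ge0 le_psi_phi.
have Llam_gt0 : 0 < Lam + lam by rewrite ltr_pwDl.
split=> //; last exact: le_trans le_psi_phi.
have -> : x + (Lam + lam)^-1 *: (psi + lam *: (v - x)) =
    (Lam / (Lam + lam)) *: (x + Lam^-1 *: psi) + (1 - Lam / (Lam + lam)) *: v.
  by apply/rowP => j; rewrite !mxE; field; rewrite !gt_eqF.
apply: convex_setP => //.
by rewrite divr_ge0 ?(ltW Lam_gt0) ?(ltW Llam_gt0) //= ler_pdivrMr // mul1r lerDl.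
Qed.

Lemma aligned_feasible_rescale psi Lam c :
  aligned_feasible psi Lam -> 0 < c -> aligned_feasible (c *: psi) (Lam * c).
Proof.
move=> [Lam_gt0 Cpsi sx0 le_sx_psi] c_gt0; split; rewrite ?mulr_gt0 ?alignZ //.
by rewrite scalerA invfM -mulrA mulVf ?mulr1 // gt_eqF.
Qed.

Lemma boost_loop_inv k psi Lam :
  boost_inv (psi, Lam) -> boost_inv (boost_loop lmo delta x m k psi Lam).
Proof.
elim: k psi Lam => [|k IH] psi Lam inv //=.
case: inv => [[-> ->]|afs].
  rewrite eqxx /=; have := inner_lmoN_ge0 (- m - 0); rewrite subr0 opprK => sm_ge0.
  case: eqP => [_|/eqP sx0]; first by left.
  case: ifP => [/accepted_align_lt|_]; last by left.
  rewrite !add0r align0; set lam := _ / _ => /align_neq0 phi0.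
  apply: IH; right; apply: aligned_feasible_fw_dir => //.
  have lam_ge0 : 0 <= lam by rewrite divr_ge0 ?exprn_ge0 ?enorm_ge0.
  by rewrite lt_def lam_ge0 andbT; apply: contraNneq phi0 => ->; rewrite scale0r.
set r := - m - psi; set v := lmo (- r).
have psi0 := aligned_feasible_neq0 afs.
rewrite psi0; set u := - _; case: (inner r u <= _) => /=.
  case: ifP => _; first by right.
  case: ifP => [/accepted_align_lt/ltW le_psi_phi|_]; last by right.
  apply: IH; right; apply: aligned_feasible_vertex le_psi_phi => //.
    by case: (lmoP (- r)).
  by rewrite divr_ge0 ?exprn_ge0 ?enorm_ge0 ?inner_lmoN_ge0.
case: ifP => _; first by right.
have nu : enorm u = 1.
  by rewrite enormN enormZ gtr0_norm ?invr_gt0 ?enorm_gt0 // mulVf // enorm_eq0.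
rewrite nu expr1n divr1; case: ifP => [/accepted_align_lt lt_psi_phi|_]; last by right.
apply: IH; right.
have phiE : psi + inner r u *: u = (1 - inner r u / enorm psi) *: psi.
  by rewrite scalerBl scale1r /u scalerN scalerA.
rewrite phiE in lt_psi_phi *; apply: aligned_feasible_rescale => //.
exact: align_ltZ_gt0 (aligned_feasible_align_ge0 afs) lt_psi_phi.
Qed.

End Boosting.

Section BoostedStep.
Variables (R : realType) (n : nat) (C : set 'rV[R]_n) (lmo : 'rV[R]_n -> 'rV[R]_n)
  (x m : 'rV[R]_n) (eta : R).
Hypotheses (convC : convex_set C) (lmoP : is_lmo C lmo) (Cx : C x)
  (eta_ge0 : 0 <= eta) (eta_le1 : eta <= 1).

(* The only properties of the step x -> y that the convergence analysis uses. *)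
Definition fw_admissible (y : 'rV[R]_n) : Prop :=
  [/\ C y, inner m (y - x) <= eta * inner m (lmo m - x)
    & enorm (y - x) <= eta * enorm (lmo m - x)].

Lemma fw_admissible_fw_step : fw_admissible (x + eta *: (lmo m - x)).
Proof.
rewrite /fw_admissible.
have -> : x + eta *: (lmo m - x) - x = eta *: (lmo m - x) by rewrite addrC addKr.
rewrite innerZr enormZ ger0_norm //; split => //.
have -> : x + eta *: (lmo m - x) = eta *: lmo m + (1 - eta) *: x.
  by rewrite scalerBr scalerBl scale1r addrCA.
by apply: convex_setP => //; [case: (lmoP m) | apply/andP].
Qed.

Lemma fw_admissible_boosted psi Lam g :
  aligned_feasible C lmo x m psi Lam -> 0 <= g <= 1 ->
  g * enorm (Lam^-1 *: psi) = eta * enorm (lmo m - x) ->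
  fw_admissible (x + g *: (Lam^-1 *: psi)).
Proof.
move=> afs /andP[g0 g1]; set d := Lam^-1 *: psi; set s := lmo m => gE.
have psi0 := aligned_feasible_neq0 lmoP Cx afs.
case: afs => Lam_gt0 Cd sx0 le_sx_psi; rewrite -/d -/s in Cd sx0 le_sx_psi *.
have d0 : d != 0 by rewrite scaler_eq0 negb_or invr_eq0 gt_eqF.
rewrite /fw_admissible.
have -> : x + g *: d - x = g *: d by rewrite addrC addKr.
rewrite innerZr enormZ ger0_norm // gE; split => //.
  have -> : x + g *: d = g *: (x + d) + (1 - g) *: x.
    by apply/rowP => j; rewrite !mxE; ring.
  by apply: convex_setP => //; apply/andP.
have le_sx_d : align (- m) (s - x) <= align (- m) d by rewrite alignZ ?invr_gt0.
have := align_le_cross sx0 d0 le_sx_d; rewrite !innerNl !mulNr lerN2 => cross.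
have := congr1 ( *%R^~ (inner m (s - x))) gE.
have := ler_wpM2l g0 cross => g_cross gE_scaled.
have : enorm (s - x) * (g * inner m d - eta * inner m (s - x)) <= 0 by nra.
by rewrite pmulr_rle0 ?enorm_gt0 // subr_le0.
Qed.

Lemma bsfw_step_fw_admissible K delta :
  0 < delta -> fw_admissible (bsfw_step lmo K delta eta x m).
Proof.
move=> delta_gt0; rewrite /bsfw_step.
have := boost_loop_inv (m := m) convC lmoP Cx delta_gt0 K (or_introl erefl).
case: (boost_loop _ _ _ _ _ _ _) => psi Lam /= inv.
case: ifP => [gamma_lt1|_]; last exact: fw_admissible_fw_step.
case: inv gamma_lt1 => [[-> ->]|afs]; first by rewrite eqxx /= eqxx ltxx.
have [Lam_gt0 _ _ _] := afs; rewrite gt_eqF //=.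
case: ifP => [d0|]; last by rewrite ltxx.
rewrite gt_min ltxx orbF => g_lt1; rewrite min_l ?ltW //.
have nd : 0 < enorm (Lam^-1 *: psi) by rewrite enorm_gt0.
apply: fw_admissible_boosted => //; last by rewrite divfK ?gt_eqF.
by rewrite (ltW g_lt1) andbT divr_ge0 ?mulr_ge0 ?enorm_ge0.
Qed.

End BoostedStep.

Section Progress.
Variables (R : realType) (n : nat) (C : set 'rV[R]_n) (D : R)
  (f : 'rV[R]_n -> R) (gradf : 'rV[R]_n -> 'rV[R]_n) (L rho : R)
  (xstar : 'rV[R]_n) (lmo : 'rV[R]_n -> 'rV[R]_n).
Hypotheses (convC : convex_set C) (diamC : is_diameter C D)
  (gradfP : forall y, C y -> differentiable f y /\
     forall h, 'd f y h = inner (gradf y) h)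
  (gradf_lipschitz : forall y z, C y -> C z ->
     enorm (gradf y - gradf z) <= L * enorm (y - z))
  (rho_gt0 : 0 < rho) (Cxstar : C xstar)
  (quasar : forall y, C y -> f xstar - f y >= rho^-1 * inner (gradf y) (xstar - y))
  (lmoP : is_lmo C lmo).

Lemma lipschitz_sq_le x y e : C x -> C y -> enorm (y - x) <= e * D ->
  L / 2 * enorm (y - x) ^+ 2 <= L / 2 * e ^+ 2 * D ^+ 2.
Proof.
move=> Cx Cy yx_le; have [L_ge0|L_lt0] := leP 0 L.
  have eD_ge0 := le_trans (enorm_ge0 _) yx_le.
  by rewrite -[X in _ <= X]mulrA -exprMn ler_wpM2l ?divr_ge0 // ler_sqr ?nnegrE ?enorm_ge0.
have subsingleton := lipschitz_subsingleton gradf_lipschitz L_lt0.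
have [_ [a [b [Ca [Cb <-]]]]] := diamC.
by rewrite (subsingleton _ _ Cx Cy) (subsingleton _ _ Ca Cb) !subrr enorm0 expr0n /= !mulr0.
Qed.

Lemma fw_admissible_progress x m eta y : C x -> 0 <= eta ->
  fw_admissible C lmo x m eta y ->
  f y - f xstar <= (1 - rho * eta) * (f x - f xstar)
    + 2 * eta * enorm (m - gradf x) * D + L / 2 * eta ^+ 2 * D ^+ 2.
Proof.
move=> Cx eta_ge0 [Cy descent_m short].
have [diam_le _] := diamC; have [Cs lmo_min] := lmoP m.
set s := lmo m in Cs lmo_min descent_m short; set Delta := m - gradf x.
have innerE v : inner m v = inner (gradf x) v + inner Delta v.
  by rewrite -innerDl addrC subrK.
have smooth := descent_lemma convC gradfP gradf_lipschitz Cx Cy.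
have quad : L / 2 * enorm (y - x) ^+ 2 <= L / 2 * eta ^+ 2 * D ^+ 2.
  apply: (lipschitz_sq_le Cx Cy (le_trans short _)).
  by rewrite ler_wpM2l // diam_le.
have step_err : - inner Delta (y - x) <= eta * enorm Delta * D.
  apply: le_trans (cauchy_schwarzN _ _) _; rewrite -mulrA mulrCA ler_wpM2l ?enorm_ge0 //.
  by apply: le_trans short _; rewrite ler_wpM2l // diam_le.
have vertex : inner m (s - x) <= inner m (xstar - x).
  by rewrite !innerBr lerD2r !(innerC m) lmo_min.
have star_err : inner Delta (xstar - x) <= enorm Delta * D.
  by apply: le_trans (cauchy_schwarz _ _) _; rewrite ler_wpM2l ?enorm_ge0 ?diam_le.
have quasar_x : inner (gradf x) (xstar - x) <= rho * (f xstar - f x).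
  by rewrite -ler_pdivrMl // quasar.
have := innerE (y - x); have := innerE (xstar - x) => E1 E2.
have := ler_wpM2l eta_ge0 vertex; have := ler_wpM2l eta_ge0 star_err.
have := ler_wpM2l eta_ge0 quasar_x.
nra.
Qed.

End Progress.

Unset Implicit Arguments.

Theorem theorem13 (R : realType) (n : nat) (C : set 'rV[R]_n) (D : R)
  (f : 'rV[R]_n -> R) (gradf : 'rV[R]_n -> 'rV[R]_n) (L rho : R)
  (xstar : 'rV[R]_n) (lmo : 'rV[R]_n -> 'rV[R]_n)
  (K : nat) (delta : R) (eta : nat -> R) (minit : 'rV[R]_n)
  (m x : nat -> 'rV[R]_n) :
  (* C nonempty compact convex with Euclidean diameter D *)
  (exists c, C c) -> compact C -> convex_set C -> is_diameter C D ->
  (* f continuously differentiable with gradient gradf, L-Lipschitz on C *)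
  (forall y, C y -> differentiable f y /\
     forall h, 'd f y h = inner (gradf y) h) ->
  {within C, continuous gradf} ->
  (forall y z, C y -> C z ->
     enorm (gradf y - gradf z) <= L * enorm (y - z)) ->
  (* rho-quasar-convexity w.r.t. a minimizer xstar of f on C *)
  0 < rho <= 1 ->
  C xstar -> (forall y, C y -> f xstar <= f y) ->
  (forall y, C y -> f xstar - f y >= rho^-1 * inner (gradf y) (xstar - y)) ->
  (* the algorithm *)
  is_lmo C lmo -> (1 <= K)%N -> 0 < delta <= 1 ->
  (forall t, 0 < eta t <= 1) ->
  x 0%N = lmo minit ->
  (forall t, x t.+1 = bsfw_step lmo K delta (eta t) (x t) (m t)) ->
  forall t,
    f (x t.+1) - f xstar <=
      (1 - rho * eta t) * (f (x t) - f xstar)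
      + 2 * eta t * enorm (m t - gradf (x t)) * D
      + L / 2 * eta t ^+ 2 * D ^+ 2.
Proof.
move=> _ _ convC diamC gradfP _ gradf_lipschitz /andP[rho_gt0 _] Cxstar _ quasar
  lmoP _ /andP[delta_gt0 _] eta01 x0E xE.
have admissible t : C (x t) ->
    fw_admissible C lmo (x t) (m t) (eta t) (x t.+1).
  have /andP[eta_gt0 eta_le1] := eta01 t.
  by rewrite xE => Cxt; apply: bsfw_step_fw_admissible => //; apply: ltW.
have Cx t : C (x t).
  elim: t => [|t IH]; first by rewrite x0E; case: (lmoP minit).
  by case: (admissible t IH).
move=> t; have /andP[eta_gt0 _] := eta01 t.
exact: (fw_admissible_progress convC diamC gradfP gradf_lipschitz rho_gt0 Cxstar
  quasar lmoP (Cx t) (ltW eta_gt0) (admissible t (Cx t))).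
Qed.
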